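(* Let $n\ge1$ and let $p=p_1\cdots p_{n-1}1$ be a strongly 312-avoiding permutation of $\{1,\dots,n\}$ ending in the entry $1$. Then the smallest $\lceil n/2\rceil$ entries of $p$ occupy the last $\lceil n/2\rceil$ positions in decreasing order; that is, $p_{n-j+1}=j$ for all $j=1,\dots,\lceil n/2\rceil$.
   Context: Permutations are written in one-line notation $p=p_1\cdots p_n$ with $p_i=p(i)$. $p$ contains a pattern $q=q_1\cdots q_m$ if there are indices $i_1<\cdots<i_m$ with $p_{i_r}<p_{i_s}$ iff $q_r<q_s$; otherwise $p$ avoids $q$. $p^2(i)=p(p(i))$. A permutation $p$ is strongly $q$-avoiding if both $p$ and $p^2$ avoid $q$. *)

(* Permutations of {1..n} are modelled as {perm 'I_n},
   i.e. 0-based: entry value v+1 <-> ordinal value v, position i+1 <-> ordinal i. *)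
From mathcomp Require Import all_boot all_fingroup.
Set Implicit Arguments. Unset Strict Implicit. Unset Printing Implicit Defensive.

Definition contains312 (n : nat) (f : 'I_n -> 'I_n) : Prop :=
  exists i j k : 'I_n, [/\ i < j, j < k & f j < f k < f i].

Definition avoids312 (n : nat) (f : 'I_n -> 'I_n) : Prop := ~ contains312 f.

Definition strongly_avoids312 (n : nat) (p : {perm 'I_n}) : Prop :=
  avoids312 (fun i => p i) /\ avoids312 (fun i => p (p i)).

(* After the position [m] of the maximal entry, [p] is decreasing (else 312
   with the maximum in front).  Since [p (p m) = p (n-1) = 0] is minimal,
   [p^2] increases across [m] (else 312 in [p^2] with [m] in the middle).
   Counting arguments then show that every entry before [m] exceeds [m],
   so [2m + 2 <= n], and that [p (p a) <= m] for [a < m]; as the values at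
   most [m] fill the end of the decreasing tail, every entry before [m] is
   at least [n-1-m].  The tail after [m] therefore consists of the values
   [n-2-m, ..., 1, 0] in this order, and it covers the last [ceil(n/2)]
   positions. *)
From mathcomp Require Import all_boot all_fingroup zify.
Set Implicit Arguments. Unset Strict Implicit. Unset Printing Implicit Defensive.

Lemma card_ord_range n lo hi : hi <= n -> #|[pred i : 'I_n | lo <= i < hi]| = hi - lo.
Proof.
move=> hi_n; rewrite -sum1_card -[hi - lo]muln1 -sum_nat_const_nat.
rewrite (big_nat_widen _ _ _ _ _ hi_n) big_geq_mkord.
by apply: eq_bigl => i; rewrite /= andbC.
Qed.

Lemma leq_range_inj n (f : 'I_n -> 'I_n) lo hi lo' hi' :
  injective f -> hi <= n -> hi' <= n ->
  (forall i : 'I_n, lo <= i < hi -> lo' <= f i < hi') -> hi - lo <= hi' - lo'.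
Proof.
move=> f_inj hi_n hi'_n f_range.
rewrite -(card_ord_range lo hi_n) -(card_ord_range lo' hi'_n) -(card_imset _ f_inj).
by apply: subset_leq_card; apply/subsetP => _ /imsetP[i i_range ->]; apply: f_range.
Qed.

Section Avoids312.

Variables (n : nat) (f : 'I_n -> 'I_n).
Hypotheses (f_avoids : avoids312 f) (f_inj : injective f).

Lemma avoids312_decreasing_after_max (m : 'I_n) :
  (forall i, f i <= f m) -> forall a b : 'I_n, m <= a -> a < b -> f b < f a.
Proof.
move=> f_max a b m_le_a a_lt_b.
have fb_lt_fm : f b < f m.
  rewrite ltn_neqAle f_max andbT; apply/eqP => /val_inj/f_inj b_eq_m.
  by move: a_lt_b; rewrite b_eq_m ltnNge m_le_a.
case: (ltngtP (f b) (f a)) => // [fa_lt_fb | /val_inj/f_inj b_eq_a]; last first.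
  by move: a_lt_b; rewrite b_eq_a ltnn.
case: (ltngtP m a) m_le_a => // [m_lt_a | /val_inj m_eq_a] _.
  by case: f_avoids; exists m, a, b; rewrite m_lt_a a_lt_b fa_lt_fb fb_lt_fm.
by move: fa_lt_fb; rewrite -m_eq_a ltnNge ltnW.
Qed.

Lemma avoids312_increasing_across_min (m : 'I_n) :
  (forall i, f m <= f i) -> forall a b : 'I_n, a < m -> m < b -> f a < f b.
Proof.
move=> f_min a b a_lt_m m_lt_b.
have fm_lt_fb : f m < f b.
  rewrite ltn_neqAle f_min andbT; apply/eqP => /val_inj/f_inj m_eq_b.
  by move: m_lt_b; rewrite m_eq_b ltnn.
case: (ltngtP (f a) (f b)) => // [fb_lt_fa | /val_inj/f_inj a_eq_b].
  by case: f_avoids; exists a, m, b; rewrite a_lt_m m_lt_b fm_lt_fb fb_lt_fa.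
by move: a_lt_m; rewrite a_eq_b ltnNge ltnW.
Qed.

End Avoids312.

Lemma decreasing_tail_reversed n (f : 'I_n -> 'I_n) (m k : nat) :
  injective f -> m + k <= n ->
  (forall a b : 'I_n, m <= a -> a < b -> f b < f a) ->
  (forall a : 'I_n, a < m -> k <= f a) ->
  forall i : 'I_n, n - k <= i -> val (f i) = n.-1 - i.
Proof.
move=> f_inj mk_n f_decr f_large i i_tail.
have i_n := ltn_ord i.
have m_le_i : m <= i by lia.
have lower : n - i.+1 <= f i - 0.
  apply: leq_range_inj f_inj _ _ _ => //; first exact: ltnW.
  by move=> b /andP[i_lt_b _]; rewrite leq0n f_decr.
rewrite /=; suff upper : ~ n - i <= f i by lia.
move=> fi_large.
have : i.+1 - 0 <= n - (n - i).
  apply: leq_range_inj f_inj _ _ _ => // a /andP[_]; rewrite ltnS ltn_ord andbT => a_le_i.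
  case: (ltnP a m) => [a_lt_m | m_le_a]; first by have := f_large a a_lt_m; lia.
  case: (ltngtP a i) a_le_i => // [a_lt_i | /val_inj ->] _; last exact: fi_large.
  by have := f_decr a i m_le_a a_lt_i; lia.
lia.
Qed.

Section StronglyAvoids312EndingInZero.

Variables (n : nat) (p : {perm 'I_n}) (last : 'I_n).
Hypotheses (p_avoids : avoids312 (fun i => p i))
           (p2_avoids : avoids312 (fun i => p (p i))).
Hypotheses (n_gt1 : 1 < n) (last_val : last = n.-1 :> nat) (p_last : p last = 0 :> nat).

Let p2_inj : injective (fun i => p (p i)).
Proof. by move=> a b /perm_inj/perm_inj. Qed.

Let argmax : 'I_n := (p^-1)%g last.

Let p_argmax : p argmax = last.
Proof. by rewrite permKV. Qed.

Lemma argmax_lt_last : argmax < last.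
Proof.
have argmax_le_last : argmax <= last by rewrite last_val; have := ltn_ord argmax; lia.
rewrite ltn_neqAle argmax_le_last andbT; apply/eqP => /val_inj argmax_eq_last.
have : p last = last by rewrite -{1}argmax_eq_last p_argmax.
by move/(congr1 (@nat_of_ord n)); rewrite p_last last_val; lia.
Qed.

Lemma p_decreasing_after_argmax (a b : 'I_n) : argmax <= a -> a < b -> p b < p a.
Proof.
apply: (avoids312_decreasing_after_max p_avoids (@perm_inj _ p)) => i.
by rewrite p_argmax last_val; have := ltn_ord (p i); lia.
Qed.

Lemma p2_increasing_across_argmax (a b : 'I_n) :
  a < argmax -> argmax < b -> p (p a) < p (p b).
Proof.
by apply: (avoids312_increasing_across_min p2_avoids p2_inj) => i; rewrite p_argmax p_last.
Qed.

Lemma argmax_lt_p2_last : argmax < p (p last).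
Proof.
have p2_last_gt0 : 0 < p (p last).
  rewrite lt0n; apply/eqP => p2_last0.
  have /perm_inj p_last_fixed : p (p last) = p last by apply: val_inj; rewrite /= p2_last0.
  by move: p_last; rewrite p_last_fixed last_val; lia.
have : argmax.+1 - 0 <= p (p last) - 0.
  apply: (leq_range_inj p2_inj (ltn_ord argmax) (ltnW (ltn_ord _))).
  move=> a /andP[_]; rewrite ltnS => a_le_argmax.
  case: (ltngtP a argmax) a_le_argmax => // [a_lt_argmax | /val_inj ->] _.
    exact: p2_increasing_across_argmax argmax_lt_last.
  by rewrite p_argmax p_last.
lia.
Qed.

Lemma p_before_argmax_neq (a : 'I_n) : a < argmax -> p a != argmax.
Proof.
move=> a_lt_argmax; apply/eqP => pa_eq.
have := p2_increasing_across_argmax a_lt_argmax argmax_lt_last.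
by rewrite pa_eq p_argmax last_val; have := ltn_ord (p (p last)); lia.
Qed.

Lemma argmax_lt_p_before (a : 'I_n) : a < argmax -> argmax < p a.
Proof.
move=> a_lt_argmax.
case: (ltngtP argmax (p a)) => // [pa_lt_argmax | /val_inj pa_eq]; last first.
  by move: (p_before_argmax_neq a_lt_argmax); rewrite -pa_eq eqxx.
pose c := (p^-1)%g argmax; have p_c : p c = argmax by rewrite permKV.
have argmax_lt_c : argmax < c.
  case: (ltngtP argmax c) => // [c_lt_argmax | /val_inj c_eq].
    by move: (p_before_argmax_neq c_lt_argmax); rewrite p_c eqxx.
  by move: argmax_lt_last; rewrite -p_argmax [in p argmax]c_eq p_c ltnn.
have first_lt_a : p last < a.
  rewrite p_last lt0n; apply/eqP => a0.
  have a_eq : a = p last by apply: val_inj; rewrite /= a0 p_last.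
  by have := argmax_lt_p2_last; rewrite -a_eq; lia.
case: p_avoids; exists (p last), a, c.
rewrite first_lt_a (ltn_trans a_lt_argmax argmax_lt_c) p_c pa_lt_argmax.
by rewrite argmax_lt_p2_last.
Qed.

Lemma argmax_bound : argmax.*2.+1 < n.
Proof.
have : argmax - 0 <= n.-1 - argmax.+1.
  apply: (leq_range_inj (@perm_inj _ p) (ltnW (ltn_ord argmax)) (leq_pred n)).
  move=> a /andP[_ a_lt_argmax]; rewrite argmax_lt_p_before //=.
  have : p a != last :> nat.
    by rewrite (inj_eq val_inj) -p_argmax (inj_eq (@perm_inj _ p)) -(inj_eq val_inj) neq_ltn a_lt_argmax.
  by rewrite last_val => /eqP; have := ltn_ord (p a); lia.
lia.
Qed.

Lemma p2_before_argmax_le (a : 'I_n) : a < argmax -> p (p a) <= argmax.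
Proof.
move=> a_lt_argmax.
have : n - argmax.+1 <= n - (p (p a)).+1.
  apply: leq_range_inj p2_inj _ _ _ => // b /andP[argmax_lt_b _].
  by rewrite ltn_ord andbT; apply: p2_increasing_across_argmax.
by have := ltn_ord (p (p a)); have := ltn_ord argmax; lia.
Qed.

Lemma p_before_argmax_large (a : 'I_n) : a < argmax -> n.-1 - argmax <= p a.
Proof.
move=> a_lt_argmax.
have argmax_lt_pa := argmax_lt_p_before a_lt_argmax.
have p2a_le := p2_before_argmax_le a_lt_argmax.
have : n - p a <= argmax.+1 - 0.
  apply: (leq_range_inj (@perm_inj _ p) (leqnn n) (ltn_ord argmax)).
  move=> b /andP[pa_le_b _]; rewrite leq0n /=.
  case: (ltngtP (p a) b) pa_le_b => // [pa_lt_b | /val_inj <-] _; last by rewrite ltnS.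
  by have := p_decreasing_after_argmax (ltnW argmax_lt_pa) pa_lt_b; lia.
lia.
Qed.

Lemma p_after_argmax (i : 'I_n) : argmax < i -> val (p i) = n.-1 - i.
Proof.
move=> argmax_lt_i.
apply: (@decreasing_tail_reversed _ _ argmax (n.-1 - argmax) (@perm_inj _ p)).
- by have := ltn_ord argmax; lia.
- exact: p_decreasing_after_argmax.
- exact: p_before_argmax_large.
- by have := ltn_ord argmax; lia.
Qed.

Lemma p_tail_reversed (i : 'I_n) : n./2 <= i -> val (p i) = n.-1 - i.
Proof.
move=> half_le_i; apply: p_after_argmax.
by have := argmax_bound; have := odd_double_half n; case: odd => /=; lia.
Qed.

End StronglyAvoids312EndingInZero.

Theorem lemma3p4 (n : nat) (hn : 0 < n) (p : {perm 'I_n}) :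
  strongly_avoids312 p ->
  (forall last : 'I_n, val last = n.-1 -> val (p last) = 0) ->
  forall (j : nat) (i : 'I_n), 1 <= j <= uphalf n -> val i = n - j ->
    val (p i) = j.-1.
Proof.
move=> [p_avoids p2_avoids] p_end0 j i /andP[j_gt0 j_le] /= i_val /=.
move: j_le; rewrite geq_uphalf_double => j_le.
have [n_le1 | n_gt1] := leqP n 1.
  by have := ltn_ord (p i); lia.
have last_lt : n.-1 < n by rewrite ltn_predL.
pose last := Ordinal last_lt.
have := @p_tail_reversed n p last p_avoids p2_avoids
  n_gt1 erefl (p_end0 last erefl) i => /=.
have := odd_double_half n; case: odd => /=; lia.
Qed.
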